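(* Fix $0<d<1$. Let $A$ be an $m\times n$ matrix which is a sub-matrix (consisting of $n$ of the columns) of some $m\times m$ orthonormal matrix, and such that all rows of $A$ have equal $\ell^2$ norm. Then there exists a subset $J\subset\{1,\dots,m\}$ with $|J|\ge(1-d)n$ such that \[ C(d)\,\frac{n}{m}\,\|w\|^2\le \|A(J)^{\mathrm{T}}w\|_{\ell_2^n}^2\qquad\text{for all } w\in\ell_2(J), \] where $C(d)=(1-\sqrt{1-d})^2$.
   Context: $\ell_2^n$ is the $n$-dimensional space with Euclidean norm $\|(a_r)\|^2=\sum|a_r|^2$. For $J\subset\{1,\dots,m\}$, $\ell_2(J)$ is the $|J|$-dimensional coordinate subspace of $\ell_2^m$ indexed by $J$, $A(J)$ is the sub-matrix of $A$ consisting of the rows with indices in $J$, and $A(J)^{\mathrm{T}}$ is its transpose. $|J|$ is the cardinality of $J$. *)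

From HB Require Import structures.
From mathcomp Require Import all_boot all_order all_algebra.
From mathcomp Require Import reals.
Set Implicit Arguments. Unset Strict Implicit. Unset Printing Implicit Defensive.
Import Order.TTheory GRing.Theory Num.Theory.
Local Open Scope ring_scope.

Definition sqnorm (R : realType) (k : nat) (v : 'cV[R]_k) : R :=
  \sum_(i < k) v i 0 ^+ 2.

Definition row_sqnorm (R : realType) (m n : nat) (A : 'M[R]_(m, n)) (i : 'I_m) : R :=
  \sum_(j < n) A i j ^+ 2.

Definition orthonormal_mx (R : realType) (m : nat) (U : 'M[R]_m) : Prop :=
  U *m U^T = 1%:M /\ U^T *m U = 1%:M.

Definition orth_col_submx (R : realType) (m n : nat) (A : 'M[R]_(m, n)) : Prop :=
  exists (U : 'M[R]_m) (f : 'I_n -> 'I_m),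
    orthonormal_mx U /\ injective f /\ A = colsub f U.

(* A(J): the submatrix of A consisting of the rows with indices in J
   (in increasing order); an element of 'M_(|J|, n). *)
Definition rows_of (R : realType) (m n : nat) (A : 'M[R]_(m, n)) (J : {set 'I_m}) :
  'M[R]_(#|J|, n) := rowsub (@enum_val _ (mem J)) A.

Definition Cd (R : realType) (d : R) : R := (1 - Num.sqrt (1 - d)) ^+ 2.

From HB Require Import structures.
From mathcomp Require Import all_boot all_order all_algebra.
From mathcomp Require Import reals.
From mathcomp Require Import ring lra.
Import Order.TTheory GRing.Theory Num.Theory.
Local Open Scope ring_scope.
Set Implicit Arguments. Unset Strict Implicit. Unset Printing Implicit Defensive.

(* Spielman-Srivastava barrier argument.  Since A^T A = 1 and all rows of A
   have squared norm c = n/m, rows are selected greedily while the Gram matrix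
   G of the selected rows satisfies G - b > 0 with potential tr (G - b)^-1
   bounded by tau.  At each step the barrier b drops by a fixed amount; by the
   Schur complement formula, adding row i keeps the barrier and raises the
   potential by (1 + q2 i) / (c - b - q1 i), where q1 i and q2 i are the
   quadratic forms of (G - b)^-1 and (G - b)^-2 on the inner products of row i
   with the selected rows.  Summed over the unselected rows these become traces
   (this is where A^T A = 1 is used), so some row is good on average.  With
   s = sqrt (1 - d) the schedule b_j = (1 - s) (n s - j) / (s m) allows about
   (1 - d) n steps, and the final barrier is at least (1 - s)^2 n / m. *)

Section MatrixEntries.
Variable R : pzRingType.

Lemma mxentryD p q (A B : 'M[R]_(p, q)) i j : (A + B) i j = A i j + B i j.
Proof. by rewrite mxE. Qed.

Lemma mxentryB p q (A B : 'M[R]_(p, q)) i j : (A - B) i j = A i j - B i j.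
Proof. by rewrite !mxE. Qed.

Lemma mxentryN p q (A : 'M[R]_(p, q)) i j : (- A) i j = - A i j.
Proof. by rewrite mxE. Qed.

Lemma mxentryZ p q (A : 'M[R]_(p, q)) c i j : (c *: A) i j = c * A i j.
Proof. by rewrite mxE. Qed.

Lemma scalar_mx11E (c : R) : (c%:M : 'M[R]_1) 0 0 = c.
Proof. by rewrite mxE eqxx mulr1n. Qed.

End MatrixEntries.

Section PositiveDefinite.
Variable R : realFieldType.

Definition psd_mx p (M : 'M[R]_p) := forall v : 'rV_p, 0 <= (v *m M *m v^T) 0 0.
Definition pd_mx p (M : 'M[R]_p) := forall v : 'rV_p, v != 0 -> 0 < (v *m M *m v^T) 0 0.

Lemma pd_mx_psd p (M : 'M[R]_p) : pd_mx M -> psd_mx M.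
Proof.
move=> M_pd v; have [->|v0] := eqVneq v 0; last exact/ltW/M_pd.
by rewrite !mul0mx mxE.
Qed.

Lemma pd_mx_unit p (M : 'M[R]_p) : pd_mx M -> M \in unitmx.
Proof.
move=> M_pd; rewrite -row_free_unit -kermx_eq0; apply/negPn/negP => ker_nz.
have [i kerM_i] : exists i, row i (kermx M) != 0.
  apply/existsP; move: ker_nz; apply: contraR; rewrite negb_exists => /forallP ker0.
  by apply/eqP/row_matrixP => i; rewrite row0; apply/eqP; move: (ker0 i); rewrite negbK.
by have := M_pd _ kerM_i; rewrite -row_mul mulmx_ker row0 mul0mx mxE ltxx.
Qed.

Lemma psd_mx1 p : psd_mx (1%:M : 'M[R]_p).
Proof.
by move=> v; rewrite mulmx1 mxE; apply: sumr_ge0 => i _; rewrite mxE sqr_ge0.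
Qed.

Lemma sum_rows_quadE p q (Y : 'M[R]_(p, q)) (W : 'M[R]_q) :
  \sum_t (row t Y *m W *m (row t Y)^T) 0 0 = \tr (Y *m W *m Y^T).
Proof.
rewrite /mxtrace; apply: eq_bigr => t _.
rewrite !mxE; apply: eq_bigr => k _; rewrite !mxE; congr (_ * _).
by apply: eq_bigr => l _; rewrite !mxE.
Qed.

Lemma psd_mx_trace_conj p q (Y : 'M[R]_(p, q)) (W : 'M[R]_q) :
  psd_mx W -> 0 <= \tr (Y *m W *m Y^T).
Proof. by move=> W_psd; rewrite -sum_rows_quadE; apply: sumr_ge0 => t _. Qed.

Lemma pd_mx_invmx p (M : 'M[R]_p) : M^T = M -> pd_mx M -> pd_mx (invmx M).
Proof.
move=> M_sym M_pd v v0; have M_unit := pd_mx_unit M_pd.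
have vP_nz : v *m invmx M != 0.
  apply: contra v0 => /eqP vP0; apply/eqP.
  by rewrite -[v]mulmx1 -(mulVmx M_unit) mulmxA vP0 mul0mx.
have := M_pd _ vP_nz; congr (0 < _ 0 0).
rewrite trmx_mul trmx_inv M_sym -!mulmxA; congr (_ *m _).
by rewrite !mulmxA mulVmx // mul1mx.
Qed.

Lemma mulmx1_invmx p (M N : 'M[R]_p) : M *m N = 1%:M -> invmx M = N.
Proof.
move=> MN1; have [M_unit _] := mulmx1_unit MN1.
by rewrite -[invmx M]mulmx1 -MN1 mulmxA mulVmx // mul1mx.
Qed.

Lemma pd_mx_add_scalar p (N : 'M[R]_p) d : pd_mx N -> 0 <= d -> pd_mx (N + d%:M).
Proof.
move=> N_pd d_ge0 v v0; rewrite mulmxDr mulmxDl mxentryD.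
apply: ltr_wpDr; last exact: N_pd.
rewrite mul_mx_scalar -scalemxAl mxentryZ; apply: mulr_ge0 => //.
by have := psd_mx1 v; rewrite mulmx1.
Qed.

Lemma mxtrace_invmx_ge0 p (M : 'M[R]_p) : M^T = M -> pd_mx M -> 0 <= \tr (invmx M).
Proof.
move=> M_sym M_pd.
have := psd_mx_trace_conj 1%:M (pd_mx_psd (pd_mx_invmx M_sym M_pd)).
by rewrite mul1mx trmx1 mulmx1.
Qed.

Lemma mxtrace_sqr_invmx_ge0 p (M : 'M[R]_p) :
  M^T = M -> 0 <= \tr (invmx M *m invmx M).
Proof.
move=> M_sym; have := psd_mx_trace_conj (invmx M) (@psd_mx1 p).
by rewrite mulmx1 trmx_inv M_sym.
Qed.

(* The resolvent identity N^-1 = P + d P N^-1 with P = (N + d)^-1, whose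
   last term has trace at least d tr (P^2). *)
Lemma mxtrace_invmx_shift p (N : 'M[R]_p) d : N^T = N -> pd_mx N -> 0 <= d ->
  d * \tr (invmx (N + d%:M) *m invmx (N + d%:M)) <=
  \tr (invmx N) - \tr (invmx (N + d%:M)).
Proof.
move=> N_sym N_pd d_ge0.
set M := N + d%:M; set P := invmx M; set Q := invmx N.
have M_unit : M \in unitmx by apply/pd_mx_unit/pd_mx_add_scalar.
have N_unit : N \in unitmx by apply: pd_mx_unit.
have M_sym : M^T = M by rewrite /M linearD /= N_sym tr_scalar_mx.
have P_sym : P^T = P by rewrite /P trmx_inv M_sym.
have resolvent : Q = P + d *: (P *m Q).
  rewrite -{1}[Q]mul1mx -(mulVmx M_unit) -/P -mulmxA /M mulmxDl (mulmxV N_unit).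
  by rewrite mul_scalar_mx mulmxDr mulmx1 scalemxAr.
have PQ : P *m Q = P *m P + d *: (P *m P *m Q).
  by rewrite {1}resolvent mulmxDr -scalemxAr mulmxA.
have PPQ_ge0 : 0 <= \tr (P *m P *m Q).
  rewrite -mulmxA mxtrace_mulC -mulmxA mulmxA -{2}P_sym.
  exact: psd_mx_trace_conj (pd_mx_psd (pd_mx_invmx N_sym N_pd)).
have PP_ge0 : 0 <= \tr (P *m P) by apply: mxtrace_sqr_invmx_ge0.
rewrite {1}resolvent mxtraceD mxtraceZ PQ mxtraceD mxtraceZ.
by rewrite addrC addKr mulrDr lerDl; apply: mulr_ge0 => //; apply: mulr_ge0.
Qed.

End PositiveDefinite.

Section BorderedMatrix.
Variables (R : realFieldType) (p : nat) (M : 'M[R]_p) (g : 'cV[R]_p) (a : 'M[R]_1).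
Hypotheses (M_sym : M^T = M) (M_pd : pd_mx M).
Let P := invmx M.
Let s := a - g^T *m P *m g.
Hypothesis schur_gt0 : 0 < s 0 0.

Let M_unit : M \in unitmx. Proof. exact: pd_mx_unit. Qed.
Let P_sym : P^T = P. Proof. by rewrite /P trmx_inv M_sym. Qed.

Lemma bordered_quadE (v : 'rV[R]_p) (z : R) :
  (row_mx v z%:M *m block_mx M g g^T a *m (row_mx v z%:M)^T) 0 0 =
  ((v + z *: (g^T *m P)) *m M *m (v + z *: (g^T *m P))^T) 0 0 + z ^+ 2 * s 0 0.
Proof.
rewrite mul_row_block tr_row_mx mul_row_col !mul_scalar_mx tr_scalar_mx !mul_mx_scalar.
rewrite [LHS]mxentryD mulmxDl -scalemxAl mxentryD !mxentryZ mxentryD mxentryZ.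
rewrite linearD linearZ /= trmx_mul P_sym trmxK.
rewrite mulmxDl mulmxDl !mulmxDr !mxentryD.
rewrite -!scalemxAl -!scalemxAr !mxentryZ.
rewrite -!mulmxA (mulKVmx M_unit) (mulKmx M_unit) mxentryN.
have -> : (g^T *m v^T) 0 0 = (v *m g) 0 0 by rewrite -trmx_mul [LHS]mxE.
rewrite expr2; ring.
Qed.

Lemma bordered_pd_mx : pd_mx (block_mx M g g^T a).
Proof.
move=> v v0; rewrite -(hsubmxK v) (mx11_scalar (rsubmx v)) bordered_quadE.
set z := rsubmx v 0 0; set v1 := lsubmx v.
have [z0|z_nz] := eqVneq z 0.
  rewrite z0 scale0r addr0 expr0n /= mul0r addr0; apply: M_pd.
  apply: contra v0 => /eqP v10; apply/eqP.
  by rewrite -(hsubmxK v) -/v1 v10 (mx11_scalar (rsubmx v)) -/z z0 raddf0 row_mx0.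
apply: ltr_pwDr; first by rewrite mulr_gt0 // lt_def sqrf_eq0 z_nz sqr_ge0.
exact: pd_mx_psd.
Qed.

Let sinv : 'M[R]_1 := ((s 0 0)^-1)%:M.
Let s_sinv : s *m sinv = 1%:M.
Proof. by rewrite (mx11_scalar s) /sinv mul_scalar_mx scale_scalar_mx mulfV // gt_eqF. Qed.

Lemma invmx_bordered :
  invmx (block_mx M g g^T a) =
  block_mx (P + P *m g *m sinv *m g^T *m P) (- (P *m g *m sinv))
           (- (sinv *m g^T *m P)) sinv.
Proof.
apply: mulmx1_invmx; rewrite mulmx_block (scalar_mx_block p 1).
have MP : M *m P = 1%:M by exact: mulmxV.
congr block_mx.
- by rewrite mulmxDr mulmxN !mulmxA MP mul1mx addrK.
- by rewrite mulmxN !mulmxA MP mul1mx addNr.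
- rewrite mulmxDr !mulmxN !mulmxA.
  have -> : a *m sinv *m g^T *m P = g^T *m P + g^T *m P *m g *m sinv *m g^T *m P.
    have aE : a = s + g^T *m P *m g by rewrite /s subrK.
    by rewrite {1}aE mulmxDl mulmxDl mulmxDl s_sinv mul1mx.
  by rewrite subrr.
- by rewrite mulmxN !mulmxA addrC -mulmxBl -/s s_sinv.
Qed.

Lemma mxtrace_invmx_bordered :
  \tr (invmx (block_mx M g g^T a)) =
  \tr P + (1 + (g^T *m P *m P *m g) 0 0) / s 0 0.
Proof.
rewrite invmx_bordered mxtrace_block mxtraceD trace_mx11 /sinv scalar_mx11E.
have -> : P *m g *m (s 0 0)^-1%:M *m g^T *m P =
          (P *m g) *m ((s 0 0)^-1%:M *m g^T *m P) by rewrite !mulmxA.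
rewrite mxtrace_mulC trace_mx11 mul_scalar_mx -!scalemxAl !mulmxA mxentryZ.
by rewrite -addrA; congr (_ + _); ring.
Qed.

End BorderedMatrix.

Lemma potential_step_ineq (R : realFieldType) (m b d tau T T2 E D : R) :
  0 < d -> 0 <= b -> 0 <= T2 -> 0 <= E -> 0 <= D -> d * T2 <= tau - T ->
  m + tau <= E * D -> b / d - 1 <= D + E * b ->
  m + T + b * T2 <= (E + (tau - T)) * (D + b * (tau - T)).
Proof.
move=> d_gt0 b_ge0 T2_ge0 E_ge0 D_ge0 shift_le pot_le bar_le.
set Pp := tau - T in shift_le *.
have Pp_ge0 : 0 <= Pp by apply: le_trans shift_le; apply: mulr_ge0 => //; apply: ltW.
have bT2_le : b * T2 <= b / d * Pp.
  have -> : b * T2 = b / d * (d * T2) by rewrite mulrA divfK // lt0r_neq0.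
  by apply: ler_wpM2l => //; rewrite divr_ge0 // ltW.
have bar_Pp : Pp * (b / d - 1) <= Pp * (D + E * b) by apply: ler_wpM2l.
have split_ge : Pp * (D + E * b) + E * D <= (E + Pp) * (D + b * Pp).
  by have := mulr_ge0 b_ge0 (mulr_ge0 Pp_ge0 Pp_ge0); nra.
apply: le_trans split_ge; apply: (@le_trans _ _ (m + T + b / d * Pp)).
  by rewrite lerD2l.
have -> : m + T + b / d * Pp = Pp * (b / d - 1) + (m + tau) by rewrite /Pp; ring.
exact: lerD.
Qed.

(* The arithmetic of one barrier step: [T] and [T2] stand for tr P and
   tr P^2, P the inverse of the Gram matrix shifted by the new barrier [b],
   and [tau], [tau'] for the old and new potential bounds; the left-hand side
   is the sum over the unselected rows computed in [barrier_step]. *)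
Lemma barrier_step_ineq (R : realFieldType) (m n p c b d tau tau' T T2 : R) :
  m * c = n -> 0 <= p -> 0 <= T -> 0 <= T2 -> d * T2 <= tau - T -> 0 < d -> 0 <= b ->
  0 <= tau' - tau -> 0 <= n - m * b - p - b * tau ->
  m + tau <= (tau' - tau) * (n - m * b - p - b * tau) ->
  b / d - 1 <= (n - m * b - p - b * tau) + (tau' - tau) * b ->
  (m - p) + (T + b * T2 - (p + 2 * b * T + b ^+ 2 * T2)) +
    (tau' - T) * ((p + b * T) - (p * c + p * b + b ^+ 2 * T)) <=
  (tau' - T) * (c - b) * (m - p).
Proof.
move=> mc p_ge0 T_ge0 T2_ge0 shift_le d_gt0 b_ge0 E_ge0 D_ge0 pot_le bar_le.
have Pp_ge0 : 0 <= tau - T by apply: le_trans shift_le; apply: mulr_ge0 => //; apply: ltW.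
have -> : (m - p) + (T + b * T2 - (p + 2 * b * T + b ^+ 2 * T2)) +
    (tau' - T) * ((p + b * T) - (p * c + p * b + b ^+ 2 * T)) =
  (tau' - T) * (c - b) * (m - p) +
  (m - 2 * p + (1 - 2 * b) * T + b * (1 - b) * T2) -
  (tau' - T) * (n - m * b - p * (1 - 2 * b) - b * (1 - b) * T).
  by rewrite -mc; ring.
rewrite -addrA gerDl subr_le0.
have lhs_le : m - 2 * p + (1 - 2 * b) * T + b * (1 - b) * T2 <= m + T + b * T2.
  have := mulr_ge0 b_ge0 T_ge0; have := mulr_ge0 (sqr_ge0 b) T2_ge0.
  rewrite expr2 => h1 h2; nra.
have LE : tau' - T = (tau' - tau) + (tau - T) by ring.
have rhs_ge : (tau' - T) * ((n - m * b - p - b * tau) + b * (tau - T)) <=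
              (tau' - T) * (n - m * b - p * (1 - 2 * b) - b * (1 - b) * T).
  apply: ler_wpM2l; first by rewrite LE addr_ge0.
  have := mulr_ge0 b_ge0 p_ge0; have := mulr_ge0 (mulr_ge0 b_ge0 b_ge0) T_ge0.
  move=> h1 h2; nra.
apply: (le_trans lhs_le); apply: le_trans rhs_ge; rewrite LE.
exact: potential_step_ineq d_gt0 b_ge0 T2_ge0 E_ge0 D_ge0 shift_le pot_le bar_le.
Qed.

Section Averaging.
Variable R : realDomainType.

Lemma exists_le_avg (I : finType) (O : pred I) (F : I -> R) K :
  (0 < #|O|)%N -> \sum_(i in O) F i <= K * #|O|%:R -> exists2 i, i \in O & F i <= K.
Proof.
move=> /card_gt0P [x xO] sum_le.
case: (pickP (fun i => (i \in O) && (F i <= K))) => [i /andP [iO Fi_le]|all_gt].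
  by exists i.
suff : K * #|O|%:R < \sum_(i in O) F i by rewrite ltNge sum_le.
rewrite mulr_natr -sumr_const; apply: ltr_sum.
  by apply/hasP; exists x; rewrite ?mem_index_enum.
by move=> i iO; have := all_gt i; rewrite iO /= => /negbT; rewrite -ltNge.
Qed.

Lemma exists_lt_avg (I : finType) (O : pred I) (F : I -> R) K :
  \sum_(i in O) F i < K * #|O|%:R -> exists2 i, i \in O & F i < K.
Proof.
move=> sum_lt.
case: (pickP (fun i => (i \in O) && (F i < K))) => [i /andP [iO Fi_lt]|all_ge].
  by exists i.
suff : K * #|O|%:R <= \sum_(i in O) F i by rewrite leNgt sum_lt.
rewrite mulr_natr -sumr_const; apply: ler_sum.
by move=> i iO; have := all_ge i; rewrite iO /= => /negbT; rewrite -leNgt.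
Qed.

End Averaging.

Lemma sum_predC_imset (V : zmodType) (I J : finType) (f : J -> I) (F : I -> V) :
  injective f ->
  \sum_(i in [predC [set f t | t : J]]) F i = \sum_i F i - \sum_t F (f t).
Proof.
move=> f_inj; rewrite [X in _ = X - _](bigID (mem [set f t | t : J])) /=.
rewrite big_imset /=; last by move=> x y _ _; apply: f_inj.
by rewrite addrC addrK; apply: eq_bigl => i; rewrite !inE.
Qed.

Lemma card_predC_imset (I J : finType) (f : J -> I) :
  injective f -> #|[predC [set f t | t : J]]| = (#|I| - #|J|)%N.
Proof. by move=> f_inj; rewrite -(cardC [set f t | t : J]) card_imset // addKn. Qed.

Section RowSelection.
Variables (R : realFieldType) (m n : nat) (A : 'M[R]_(m, n)) (c : R).
Hypothesis A_isometry : A^T *m A = 1%:M.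
Hypothesis row_quad : forall i, (row i A *m (row i A)^T) 0 0 = c.

(* A selection of [p] rows of [A] is an injection [f : 'I_p -> 'I_m]. *)
Definition gram p (f : 'I_p -> 'I_m) := rowsub f A *m (rowsub f A)^T.
Definition cross p (f : 'I_p -> 'I_m) i := row i A *m (rowsub f A)^T.
Definition cross_quad p (f : 'I_p -> 'I_m) (Z : 'M[R]_p) i :=
  (cross f i *m Z *m (cross f i)^T) 0 0.

Lemma gram_sym p (f : 'I_p -> 'I_m) : (gram f)^T = gram f.
Proof. by rewrite /gram trmx_mul trmxK. Qed.

Lemma shifted_gram_sym p (f : 'I_p -> 'I_m) (b : R) : (gram f - b%:M)^T = gram f - b%:M.
Proof. by rewrite linearB /= gram_sym tr_scalar_mx. Qed.

Lemma mxtrace_gram p (f : 'I_p -> 'I_m) : \tr (gram f) = p%:R * c.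
Proof.
have := sum_rows_quadE (rowsub f A) 1%:M; rewrite mulmx1 -/(gram f) => <-.
under eq_bigr => t _ do rewrite mulmx1 row_rowsub row_quad.
by rewrite sumr_const card_ord mulr_natl.
Qed.

Lemma sum_cross_quad p (f : 'I_p -> 'I_m) (Z : 'M[R]_p) :
  \sum_i cross_quad f Z i = \tr (Z *m gram f).
Proof.
under eq_bigr => i _ do rewrite /cross_quad /cross -row_mul.
rewrite sum_rows_quadE trmx_mul trmxK -!mulmxA mxtrace_mulC -!mulmxA A_isometry.
by rewrite mulmx1 mxtrace_mulC -mulmxA.
Qed.

Lemma sum_cross_quad_selected p (f : 'I_p -> 'I_m) (Z : 'M[R]_p) :
  \sum_t cross_quad f Z (f t) = \tr (gram f *m Z *m gram f).
Proof.
under eq_bigr => t _ do rewrite /cross_quad /cross -row_rowsub -row_mul -/(gram f).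
by rewrite sum_rows_quadE gram_sym.
Qed.

Lemma sum_cross_quad_unselected p (f : 'I_p -> 'I_m) (Z : 'M[R]_p) : injective f ->
  \sum_(i in [predC [set f t | t : 'I_p]]) cross_quad f Z i =
  \tr (Z *m gram f) - \tr (gram f *m Z *m gram f).
Proof.
by move=> f_inj; rewrite sum_predC_imset // sum_cross_quad sum_cross_quad_selected.
Qed.

Definition extend_sel p (f : 'I_p -> 'I_m) (i : 'I_m) : 'I_(p + 1) -> 'I_m :=
  fun t => match split t with inl a => f a | inr _ => i end.

Lemma extend_sel_inj p (f : 'I_p -> 'I_m) i :
  injective f -> i \notin [set f t | t : 'I_p] -> injective (extend_sel f i).
Proof.
move=> f_inj i_new t1 t2; rewrite /extend_sel.
case: splitP => [a1 e1|a1 e1]; case: splitP => [a2 e2|a2 e2].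
- by move=> /f_inj a12; apply: val_inj; rewrite /= e1 e2 a12.
- by move=> fa1; case/negP: i_new; apply/imsetP; exists a1.
- by move=> fa2; case/negP: i_new; apply/imsetP; exists a2.
- by move=> _; apply: val_inj; rewrite /= e1 e2 !ord1.
Qed.

Lemma rowsub_extend_sel p (f : 'I_p -> 'I_m) i :
  rowsub (extend_sel f i) A = col_mx (rowsub f A) (row i A).
Proof.
apply/matrixP => t j; rewrite !mxE /extend_sel.
by case: (split t) => [a|a]; rewrite !mxE.
Qed.

Lemma gram_extend_sel p (f : 'I_p -> 'I_m) i (b : R) :
  gram (extend_sel f i) - b%:M =
  block_mx (gram f - b%:M) (cross f i)^T (cross f i) (row i A *m (row i A)^T - b%:M).
Proof.
rewrite /gram rowsub_extend_sel tr_col_mx mul_col_row (scalar_mx_block p 1).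
by rewrite opp_block_mx add_block_mx !oppr0 !addr0 /cross trmx_mul trmxK.
Qed.

End RowSelection.

Section ShiftedTraces.
Variables (R : realFieldType) (p : nat) (M P : 'M[R]_p) (b : R).
Hypotheses (PM : P *m M = 1%:M) (MP : M *m P = 1%:M).
Let G := M + b%:M.

Lemma mxtrace_PG : \tr (P *m G) = p%:R + b * \tr P.
Proof. by rewrite /G mulmxDr PM mul_mx_scalar mxtraceD mxtrace1 mxtraceZ. Qed.

Lemma mxtrace_PPG : \tr (P *m P *m G) = \tr P + b * \tr (P *m P).
Proof. by rewrite /G mulmxDr -mulmxA PM mulmx1 mul_mx_scalar mxtraceD mxtraceZ. Qed.

Lemma mxtrace_GPG : \tr (G *m P *m G) = \tr G + b * p%:R + b ^+ 2 * \tr P.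
Proof.
rewrite /G mulmxDr !mulmxDl MP mul1mx !mul_scalar_mx !mul_mx_scalar -scalemxAl PM.
by rewrite scalerA !mxtraceD !mxtraceZ mxtrace1 mxtrace_scalar expr2; ring.
Qed.

Lemma mxtrace_GPPG : \tr (G *m (P *m P) *m G) = p%:R + 2 * b * \tr P + b ^+ 2 * \tr (P *m P).
Proof.
rewrite /G mulmxDr !mulmxDl !mulmxA MP mul1mx -mulmxA PM mulmx1.
rewrite !mul_scalar_mx -!scalemxAl !mul_mx_scalar scalerA.
by rewrite !mxtraceD !mxtraceZ mxtrace1 expr2; ring.
Qed.

End ShiftedTraces.

Lemma ratio_le_of_avg_le (R : realFieldType) (q1 q2 L r : R) :
  0 <= q2 -> 0 <= L -> 1 + q2 + L * q1 <= L * r -> 0 < r - q1 /\ (1 + q2) / (r - q1) <= L.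
Proof.
move=> q2_ge0 L_ge0 avg_le.
have ratio_le : 1 + q2 <= L * (r - q1) by rewrite mulrBr lerBrDr.
have r_gt : 0 < r - q1.
  rewrite ltNge; apply/negP => r_le.
  have : L * (r - q1) <= 0 by apply: mulr_ge0_le0.
  by apply/negP; rewrite -ltNge; apply: lt_le_trans ratio_le; rewrite ltr_pwDl.
by split => //; rewrite ler_pdivrMr.
Qed.

Section BarrierStep.
Variables (R : realFieldType) (m n : nat) (A : 'M[R]_(m, n)) (c : R).
Hypothesis A_isometry : A^T *m A = 1%:M.
Hypothesis row_quad : forall i, (row i A *m (row i A)^T) 0 0 = c.
Hypothesis mc : m%:R * c = n%:R.

Section Unselected.
Variables (p : nat) (f : 'I_p -> 'I_m) (b : R).
Hypotheses (f_inj : injective f) (M_pd : pd_mx (gram A f - b%:M)).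
Let M := gram A f - b%:M.
Let P := invmx M.
Let U := [predC [set f t | t : 'I_p]].

Let M_sym : M^T = M. Proof. exact: shifted_gram_sym. Qed.
Let PM : P *m M = 1%:M. Proof. exact/mulVmx/pd_mx_unit. Qed.
Let MP : M *m P = 1%:M. Proof. exact/mulmxV/pd_mx_unit. Qed.
Let gramE : gram A f = M + b%:M. Proof. by rewrite subrK. Qed.

Lemma card_unselected : #|U| = (m - p)%N.
Proof. by rewrite card_predC_imset // !card_ord. Qed.

Lemma sum_unselected_quad_inv :
  \sum_(i in U) cross_quad A f P i = p%:R + b * \tr P - (p%:R * c + b * p%:R + b ^+ 2 * \tr P).
Proof.
rewrite sum_cross_quad_unselected // gramE mxtrace_PG // mxtrace_GPG //.
by rewrite -gramE (mxtrace_gram row_quad).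
Qed.

Lemma sum_unselected_quad_inv2 :
  \sum_(i in U) cross_quad A f (P *m P) i =
  \tr P + b * \tr (P *m P) - (p%:R + 2 * b * \tr P + b ^+ 2 * \tr (P *m P)).
Proof.
by rewrite sum_cross_quad_unselected // gramE mxtrace_PPG // mxtrace_GPPG.
Qed.

Lemma cross_quad_sqr_ge0 i : 0 <= cross_quad A f (P *m P) i.
Proof.
rewrite /cross_quad /P; have := psd_mx1 (cross A f i *m invmx M).
by rewrite mulmx1 trmx_mul trmx_inv M_sym !mulmxA.
Qed.

(* The new shifted Gram matrix is bordered by [cross A f i], with Schur
   complement [c - b - cross_quad A f P i]. *)
Lemma extend_unselected i : i \in U -> 0 < c - b - cross_quad A f P i ->
  [/\ injective (extend_sel f i), pd_mx (gram A (extend_sel f i) - b%:M) &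
      \tr (invmx (gram A (extend_sel f i) - b%:M)) =
      \tr P + (1 + cross_quad A f (P *m P) i) / (c - b - cross_quad A f P i)].
Proof.
rewrite inE => i_new schur_gt0.
have schur_gt0' : 0 < (row i A *m (row i A)^T - b%:M -
   ((cross A f i)^T)^T *m P *m (cross A f i)^T) 0 0.
  by rewrite trmxK !mxentryB row_quad scalar_mx11E.
split; first exact: extend_sel_inj.
  by rewrite gram_extend_sel -{2}[cross A f i]trmxK; apply: bordered_pd_mx.
rewrite gram_extend_sel -{2}[cross A f i]trmxK mxtrace_invmx_bordered // !trmxK.
by rewrite !mxentryB row_quad scalar_mx11E /cross_quad mulmxA.
Qed.

End Unselected.

Lemma lower_barrier p (f : 'I_p -> 'I_m) (b d tau : R) :
  pd_mx (gram A f - b%:M) -> \tr (invmx (gram A f - b%:M)) <= tau -> 0 < d ->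
  pd_mx (gram A f - (b - d)%:M) /\
  d * \tr (invmx (gram A f - (b - d)%:M) *m invmx (gram A f - (b - d)%:M)) <=
    tau - \tr (invmx (gram A f - (b - d)%:M)).
Proof.
move=> N_pd pot_le d_gt0.
have shiftE : gram A f - (b - d)%:M = (gram A f - b%:M) + d%:M.
  by rewrite raddfB opprB addrA addrAC.
have shift_le := mxtrace_invmx_shift (shifted_gram_sym A f b) N_pd (ltW d_gt0).
rewrite -shiftE in shift_le; split; last by apply: (le_trans shift_le); rewrite lerD2r.
by rewrite shiftE; apply: pd_mx_add_scalar => //; apply: ltW.
Qed.

Lemma barrier_step p (f : 'I_p -> 'I_m) (b d tau tau' : R) :
  injective f -> pd_mx (gram A f - b%:M) -> \tr (invmx (gram A f - b%:M)) <= tau ->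
  0 < d -> 0 <= b - d -> (p < m)%N -> 0 <= tau' - tau ->
  0 <= n%:R - m%:R * (b - d) - p%:R - (b - d) * tau ->
  m%:R + tau <= (tau' - tau) * (n%:R - m%:R * (b - d) - p%:R - (b - d) * tau) ->
  (b - d) / d - 1 <= (n%:R - m%:R * (b - d) - p%:R - (b - d) * tau) + (tau' - tau) * (b - d) ->
  exists f' : 'I_(p + 1) -> 'I_m,
    [/\ injective f', pd_mx (gram A f' - (b - d)%:M) &
        \tr (invmx (gram A f' - (b - d)%:M)) <= tau'].
Proof.
move=> f_inj N_pd pot_le d_gt0 b'_ge0 p_lt_m E_ge0 D_ge0 pot_sched bar_sched.
have [M_pd dT2_le] := lower_barrier N_pd pot_le d_gt0.
set b' := b - d in b'_ge0 D_ge0 pot_sched bar_sched M_pd dT2_le *.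
have T_ge0 := mxtrace_invmx_ge0 (shifted_gram_sym A f b') M_pd.
have T2_ge0 := mxtrace_sqr_invmx_ge0 (shifted_gram_sym A f b').
set P := invmx (gram A f - b'%:M) in T_ge0 T2_ge0 dT2_le *.
set L := tau' - \tr P.
have L_ge0 : 0 <= L.
  have T_le : 0 <= tau - \tr P by apply: le_trans dT2_le; rewrite mulr_ge0 // ltW.
  by rewrite /L -[tau'](subrK tau) -addrA addr_ge0.
set U := [predC [set f t | t : 'I_p]].
pose q1 := cross_quad A f P.
pose q2 := cross_quad A f (P *m P).
have avg_le : \sum_(i in U) (1 + q2 i + L * q1 i) <= L * (c - b') * #|U|%:R.
  rewrite !big_split /= -mulr_sumr sumr_const sum_unselected_quad_inv //.
  rewrite sum_unselected_quad_inv2 // card_unselected // natrB ?(ltnW p_lt_m) //.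
  have := barrier_step_ineq mc (ler0n _ p) T_ge0 T2_ge0 dT2_le d_gt0 b'_ge0
    E_ge0 D_ge0 pot_sched bar_sched.
  by apply: le_trans; rewrite le_eqVlt; apply/orP; left; apply/eqP; rewrite -/P /L; ring.
have U_gt0 : (0 < #|U|)%N by rewrite card_unselected // subn_gt0.
have [i iU avg_i] := exists_le_avg U_gt0 avg_le.
have [schur_gt0 ratio_le] := ratio_le_of_avg_le (cross_quad_sqr_ge0 _ b' i) L_ge0 avg_i.
have [ext_inj ext_pd ext_pot] := extend_unselected f_inj M_pd iU schur_gt0.
exists (extend_sel f i); split => //.
by rewrite ext_pot addrC -lerBrDr.
Qed.

(* The last step adds a row without moving the barrier; only the barrier
   has to survive, which the potential bound guarantees on average. *)
Lemma barrier_last_step p (f : 'I_p -> 'I_m) (b tau : R) :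
  injective f -> pd_mx (gram A f - b%:M) -> \tr (invmx (gram A f - b%:M)) <= tau ->
  0 <= b -> (p <= m)%N -> 0 < n%:R - m%:R * b - p%:R - b * tau ->
  exists f' : 'I_(p + 1) -> 'I_m, injective f' /\ pd_mx (gram A f' - b%:M).
Proof.
move=> f_inj M_pd pot_le b_ge0 p_le_m slack_gt0.
have T_ge0 := mxtrace_invmx_ge0 (shifted_gram_sym A f b) M_pd.
set T := \tr (invmx (gram A f - b%:M)) in pot_le T_ge0.
set U := [predC [set f t | t : 'I_p]].
have avg_lt : \sum_(i in U) cross_quad A f (invmx (gram A f - b%:M)) i < (c - b) * #|U|%:R.
  rewrite sum_unselected_quad_inv // card_unselected // natrB // -/T -subr_gt0.
  have -> : (c - b) * (m%:R - p%:R) - (p%:R + b * T - (p%:R * c + b * p%:R + b ^+ 2 * T)) =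
     (n%:R - m%:R * b - p%:R - b * tau) + (b * (tau - T) + 2 * (b * p%:R) + b ^+ 2 * T).
    by rewrite -mc; ring.
  apply: (lt_le_trans slack_gt0); rewrite lerDl.
  by rewrite !addr_ge0 ?mulr_ge0 ?sqr_ge0 ?subr_ge0.
have [i iU] := exists_lt_avg avg_lt; rewrite -subr_gt0 => schur_gt0.
have [ext_inj ext_pd _] := extend_unselected f_inj M_pd iU schur_gt0.
by exists (extend_sel f i).
Qed.

End BarrierStep.

Section Schedule.
Variables (R : realFieldType) (m n : nat) (s : R).
Hypotheses (s_gt0 : 0 < s) (s_lt1 : s < 1) (m_gt0 : (0 < m)%N).

(* Barrier and potential bound after [j] steps, for [s = sqrt (1 - d)]. *)
Definition barrier (j : nat) : R := (1 - s) * (n%:R * s - j%:R) / (s * m%:R).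
Definition potential_bound (j : nat) : R := m%:R * j%:R / (n%:R * s - j%:R).
Definition barrier_decr : R := (1 - s) / (s * m%:R).

Let mR_gt0 : 0 < m%:R :> R. Proof. by rewrite ltr0n. Qed.
Let one_s_gt0 : 0 < 1 - s. Proof. by rewrite subr_gt0. Qed.

Lemma barrier_decrE j : barrier j - barrier_decr = barrier j.+1.
Proof.
by rewrite /barrier /barrier_decr -addn1 natrD; field; rewrite gt_eqF ?lt0r_neq0.
Qed.

Lemma barrier_decr_gt0 : 0 < barrier_decr.
Proof. by rewrite divr_gt0 ?mulr_gt0. Qed.

Lemma barrier_ge j : j%:R <= s ^+ 2 * n%:R -> (1 - s) ^+ 2 * (n%:R / m%:R) <= barrier j.
Proof.
move=> j_le; rewrite /barrier.
have -> : (1 - s) ^+ 2 * (n%:R / m%:R) = (1 - s) * (n%:R * s - s ^+ 2 * n%:R) / (s * m%:R).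
  by field; rewrite gt_eqF ?lt0r_neq0.
apply: ler_wpM2r; first by rewrite invr_ge0 mulr_ge0 // ltW.
by apply: ler_wpM2l; [exact: ltW | rewrite lerD2l lerN2].
Qed.

Section Step.
Variable j : nat.
Hypothesis u_gt1 : 1 < n%:R * s - j%:R.
Let u := n%:R * s - j%:R.
Let b := barrier j - barrier_decr.
Let E := potential_bound j.+1 - potential_bound j.
Let D := n%:R - m%:R * b - j%:R - b * potential_bound j.

Let u_gt0 : 0 < u. Proof. exact: lt_trans u_gt1. Qed.
Let u1_gt0 : 0 < u - 1. Proof. by rewrite subr_gt0. Qed.
Let ns_gt0 : 0 < n%:R * s.
Proof. by apply: (lt_le_trans u_gt0); rewrite /u lerBlDr lerDl ler0n. Qed.
Let slack_extra_ge0 : 0 <= n%:R * (1 - s) / u.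
Proof. by rewrite divr_ge0 // ?mulr_ge0 // ltW. Qed.

Lemma next_barrierE : b = (1 - s) * (u - 1) / (s * m%:R).
Proof. by rewrite /b barrier_decrE /barrier -addn1 natrD /u opprD addrA. Qed.

Lemma potential_incrE : E = m%:R * (n%:R * s) / (u * (u - 1)).
Proof.
rewrite /E /potential_bound /u -addn1 natrD opprD addrA.
by field; rewrite -/u (gt_eqF u_gt0) (gt_eqF u1_gt0).
Qed.

Lemma slackE : D = u + n%:R * (1 - s) / u.
Proof.
rewrite /D next_barrierE /potential_bound /u.
by field; rewrite -/u (gt_eqF u_gt0) (gt_eqF s_gt0) (gt_eqF mR_gt0).
Qed.

Lemma next_barrier_ge0 : 0 <= b.
Proof.
by rewrite next_barrierE; apply/ltW/divr_gt0; apply: mulr_gt0.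
Qed.

Lemma potential_incr_gt0 : 0 < E.
Proof.
by rewrite potential_incrE; apply: divr_gt0; apply: mulr_gt0.
Qed.

Lemma slack_ge0 : 0 <= D.
Proof.
by rewrite slackE; apply: addr_ge0; first exact: ltW.
Qed.

Lemma potential_bound_sched : m%:R + potential_bound j <= E * D.
Proof.
have -> : m%:R + potential_bound j = m%:R * (n%:R * s) / u.
  by rewrite /potential_bound /u; field; rewrite -/u gt_eqF.
have -> : E * D = (m%:R * (n%:R * s) / u) * ((u + n%:R * (1 - s) / u) / (u - 1)).
  by rewrite potential_incrE slackE; field; rewrite !gt_eqF.
have K_ge0 : 0 <= m%:R * (n%:R * s) / u by apply/ltW/divr_gt0 => //; apply: mulr_gt0.
by rewrite ler_peMr // ler_pdivlMr // mul1r -[u - 1]addr0; apply: lerD; rewrite ?gerBl.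
Qed.

Lemma barrier_sched : b / barrier_decr - 1 <= D + E * b.
Proof.
have -> : b / barrier_decr - 1 = u - 2.
  by rewrite next_barrierE /barrier_decr; field; rewrite !gt_eqF ?mulr_gt0.
rewrite slackE -[leRHS]addrA lerD2l; apply: (@le_trans _ _ 0); first by rewrite oppr_le0.
by apply: addr_ge0; last exact: mulr_ge0 (ltW potential_incr_gt0) next_barrier_ge0.
Qed.

End Step.

Variables (A : 'M[R]_(m, n)) (c : R).
Hypotheses (A_isometry : A^T *m A = 1%:M)
  (row_quad : forall i, (row i A *m (row i A)^T) 0 0 = c)
  (mc : m%:R * c = n%:R) (n_le_m : (n <= m)%N).

(* The size [p] is kept apart from [j] because ['I_(j + 1)], the type
   produced by [extend_sel], is not convertible to ['I_j.+1]. *)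
Definition barrier_inv j := exists p (f : 'I_p -> 'I_m),
  [/\ p = j, injective f, pd_mx (gram A f - (barrier j)%:M) &
      \tr (invmx (gram A f - (barrier j)%:M)) <= potential_bound j].

Lemma barrier_inv0 : barrier_inv 0.
Proof.
exists 0%N, (fun _ => Ordinal m_gt0); split => //; first by case.
  by move=> v; rewrite thinmx0 eqxx.
by rewrite /mxtrace big_ord0 /potential_bound mulr0 mul0r.
Qed.

Lemma steps_lt_m j : j%:R < n%:R * s -> (j < m)%N.
Proof.
move=> j_lt; apply: leq_trans n_le_m; rewrite -(ltr_nat R).
apply: (lt_le_trans j_lt); rewrite ger_pMr ?ltW //.
by rewrite ltr0n lt0n; apply: contraTneq j_lt => ->; rewrite mul0r -leNgt ler0n.
Qed.

Lemma barrier_invS j : j.+1%:R < n%:R * s -> barrier_inv j -> barrier_inv j.+1.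
Proof.
move=> j1_lt [p [f [p_eq f_inj f_pd f_pot]]]; subst p.
have u_gt1 : 1 < n%:R * s - j%:R by rewrite ltrBrDr addrC natr1.
have j_lt_m : (j < m)%N by apply: steps_lt_m; apply: lt_trans j1_lt; rewrite ltr_nat.
have [f' [f'_inj f'_pd f'_pot]] := barrier_step A_isometry row_quad mc f_inj f_pd f_pot
  barrier_decr_gt0 (next_barrier_ge0 u_gt1) j_lt_m (ltW (potential_incr_gt0 u_gt1))
  (slack_ge0 u_gt1) (potential_bound_sched u_gt1) (barrier_sched u_gt1).
by exists (j + 1)%N, f'; split; rewrite ?addn1 -?barrier_decrE.
Qed.

Lemma barrier_invP j : j%:R < n%:R * s -> barrier_inv j.
Proof.
elim: j => [|j IHj] j_lt; first exact: barrier_inv0.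
by apply: barrier_invS => //; apply: IHj; apply: lt_trans j_lt; rewrite ltr_nat.
Qed.

Lemma barrier_selection K : K%:R < n%:R * s ->
  exists f : 'I_(K + 1) -> 'I_m, injective f /\ pd_mx (gram A f - (barrier K)%:M).
Proof.
move=> K_lt; have [p [f [p_eq f_inj f_pd f_pot]]] := barrier_invP K_lt; subst p.
have last_slackE : n%:R - m%:R * barrier K - K%:R - barrier K * potential_bound K =
              n%:R * s - K%:R.
  by rewrite /barrier /potential_bound; field; rewrite !gt_eqF // ?subr_gt0 ?mulr_gt0.
apply: (barrier_last_step A_isometry row_quad mc f_inj f_pd f_pot).
- by rewrite /barrier divr_ge0 ?mulr_ge0 ?subr_ge0 ?ltW ?ler0n.
- exact/ltnW/steps_lt_m.
- by rewrite last_slackE subr_gt0.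
Qed.

End Schedule.

Section RestrictedInvertibility.
Variables (R : realType) (m n : nat) (A : 'M[R]_(m, n)).

Lemma sqnormE k (u : 'cV[R]_k) : sqnorm u = (u^T *m u) 0 0.
Proof. by rewrite /sqnorm mxE; apply: eq_bigr => i _; rewrite !mxE expr2. Qed.

Lemma sqnorm_ge0 k (u : 'cV[R]_k) : 0 <= sqnorm u.
Proof. by apply: sumr_ge0 => i _; apply: sqr_ge0. Qed.

Lemma row_sqnormE i : row_sqnorm A i = (row i A *m (row i A)^T) 0 0.
Proof. by rewrite /row_sqnorm mxE; apply: eq_bigr => j _; rewrite !mxE expr2. Qed.

Lemma orth_col_submx_isometry : orth_col_submx A -> A^T *m A = 1%:M.
Proof.
move=> [U [f [[_ UTU] [f_inj ->]]]]; apply/matrixP => a b.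
have := congr1 (fun M : 'M[R]_m => M (f a) (f b)) UTU.
rewrite /= !mxE (inj_eq f_inj) => <-.
by apply: eq_bigr => i _; rewrite !mxE.
Qed.

Lemma orth_col_submx_le : orth_col_submx A -> (n <= m)%N.
Proof. by move=> [U [f [_ [f_inj _]]]]; have := leq_card f f_inj; rewrite !card_ord. Qed.

Lemma sum_row_sqnorm : A^T *m A = 1%:M -> \sum_i row_sqnorm A i = n%:R.
Proof.
move=> A_isometry; have := sum_rows_quadE A 1%:M.
rewrite mulmx1 mxtrace_mulC A_isometry mxtrace1 => <-.
by apply: eq_bigr => i _; rewrite mulmx1 row_sqnormE.
Qed.

(* [rows_of] lists the rows of [J] in increasing order, while [f] lists them
   in its own order: [w] is transported through [enum_rank_in]. *)
Lemma sqnorm_rows_of_ge q (f : 'I_q -> 'I_m) (t0 : 'I_q) (b : R) :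
  injective f -> pd_mx (gram A f - b%:M) ->
  forall w : 'cV[R]_#|[set f t | t : 'I_q]|,
    b * sqnorm w <= sqnorm ((rows_of A [set f t | t : 'I_q])^T *m w).
Proof.
move=> f_inj M_pd w; set J := [set f t | t : 'I_q].
have ft0_J : f t0 \in J by apply/imsetP; exists t0.
pose v : 'rV[R]_q := \row_t w (enum_rank_in ft0_J (f t)) 0.
have f_inj_in : {in predT &, injective f} by move=> x y _ _; apply: f_inj.
have wE : sqnorm w = (v *m v^T) 0 0.
  rewrite /sqnorm mxE.
  have -> : \sum_(i < #|J|) w i 0 ^+ 2 = \sum_(i in J) w (enum_rank_in ft0_J i) 0 ^+ 2.
    by rewrite [RHS]big_enum_val /=; apply: eq_bigr => i _; rewrite enum_valK_in.
  by rewrite big_imset //=; apply: eq_bigr => t _; rewrite !mxE expr2.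
have rowsE : (rows_of A J)^T *m w = (rowsub f A)^T *m v^T.
  apply/matrixP => j k; rewrite !mxE ord1.
  have -> : \sum_(i < #|J|) (rows_of A J)^T j i * w i 0 =
            \sum_(i in J) A i j * w (enum_rank_in ft0_J i) 0.
    by rewrite [RHS]big_enum_val /=; apply: eq_bigr => i _; rewrite enum_valK_in !mxE.
  by rewrite big_imset //=; apply: eq_bigr => t _; rewrite !mxE.
rewrite wE rowsE sqnormE trmx_mul !trmxK mulmxA -[v *m _ *m _]mulmxA -/(gram A f).
have := pd_mx_psd M_pd v; rewrite mulmxBr mulmxBl mxentryB mul_mx_scalar.
by rewrite -scalemxAl mxentryZ subr_ge0.
Qed.

Lemma restricted_invertibility (s : R) (K : nat) :
  0 < s -> s < 1 -> (0 < n)%N -> A^T *m A = 1%:M -> (n <= m)%N ->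
  (forall i j, row_sqnorm A i = row_sqnorm A j) -> K%:R <= s ^+ 2 * n%:R ->
  exists J : {set 'I_m}, #|J| = K.+1 /\
    forall w : 'cV[R]_#|J|,
      (1 - s) ^+ 2 * (n%:R / m%:R) * sqnorm w <= sqnorm ((rows_of A J)^T *m w).
Proof.
move=> s_gt0 s_lt1 n_gt0 A_isometry n_le_m rows_eq K_le.
have m_gt0 : (0 < m)%N := leq_trans n_gt0 n_le_m.
pose c := row_sqnorm A (Ordinal m_gt0).
have row_quad i : (row i A *m (row i A)^T) 0 0 = c by rewrite -row_sqnormE; apply: rows_eq.
have mc : m%:R * c = n%:R.
  rewrite -(sum_row_sqnorm A_isometry) (eq_bigr (fun=> c)) => [|i _]; last exact: rows_eq.
  by rewrite sumr_const card_ord mulr_natl.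
have K_lt : K%:R < n%:R * s.
  apply: (le_lt_trans K_le); rewrite expr2 -mulrA [n%:R * s]mulrC gtr_pMl //.
  by rewrite mulr_gt0 // ltr0n.
have [f [f_inj f_pd]] :=
  barrier_selection s_gt0 s_lt1 m_gt0 A_isometry row_quad mc n_le_m K_lt.
have t0 : 'I_(K + 1) by exists K; rewrite addn1.
exists [set f t | t : 'I_(K + 1)]; split; first by rewrite card_imset // card_ord addn1.
move=> w; apply: le_trans (sqnorm_rows_of_ge t0 f_inj f_pd w).
by rewrite ler_wpM2r ?sqnorm_ge0 ?barrier_ge.
Qed.

End RestrictedInvertibility.

Unset Implicit Arguments. Set Strict Implicit. Set Printing Implicit Defensive.

Theorem corollary2 (R : realType) (d : R) (m n : nat) (A : 'M[R]_(m, n)) :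
  0 < d -> d < 1 ->
  orth_col_submx A ->
  (forall i j : 'I_m, row_sqnorm A i = row_sqnorm A j) ->
  exists J : {set 'I_m},
    (1 - d) * n%:R <= #|J|%:R /\
    forall w : 'cV[R]_#|J|,
      Cd d * (n%:R / m%:R) * sqnorm w <= sqnorm ((rows_of A J)^T *m w).
Proof.
move=> d_gt0 d_lt1 A_orth rows_eq.
have [n0|n_gt0] := posnP n.
  exists set0; split => [|w]; first by rewrite n0 mulr0 cards0.
  by rewrite (_ : n%:R = 0) ?n0 // mul0r mulr0 mul0r sqnorm_ge0.
have d'_gt0 : 0 < 1 - d by rewrite subr_gt0.
pose s := Num.sqrt (1 - d).
have s_gt0 : 0 < s by rewrite sqrtr_gt0.
have s_lt1 : s < 1 by rewrite -sqrtr1 ltr_sqrt // ltrBlDr ltrDl.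
have K_le : (Num.truncn ((1 - d) * n%:R))%:R <= s ^+ 2 * n%:R.
  by rewrite sqr_sqrtr ?(ltW d'_gt0) // truncn_le mulr_ge0 // ltW.
have [J [cardJ J_bound]] := restricted_invertibility s_gt0 s_lt1 n_gt0
  (orth_col_submx_isometry A_orth) (orth_col_submx_le A_orth) rows_eq K_le.
exists J; split; last exact: J_bound.
by rewrite cardJ ltW // -truncn_le_nat.
Qed.
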